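(* There exists $h_c\in(\tfrac12,\tfrac34)$ such that $\sum_{k=1}^\infty\rho_h^2(k)<\frac14$ for all $h\in(\tfrac12,h_c)$, and $\sum_{k=1}^\infty\rho_h^2(k)>\frac14$ for all $h\in(h_c,\tfrac34)$.
   Context: $\rho_h(k)=\frac12\big((k+1)^{2h}+(k-1)^{2h}-2k^{2h}\big)$ for integers $k\ge1$. *)

From Stdlib Require Import Reals.
From Coquelicot Require Import Coquelicot.
Open Scope R_scope.

(* x^a for x >= 0 and real a > 0, with the convention 0^a = 0
   (Stdlib's Rpower 0 a = 1, which would be wrong at k = 1). *)
Definition rpow (x a : R) : R :=
  if Rle_dec x 0 then 0 else Rpower x a.

Definition rho (h : R) (k : nat) : R :=
  / 2 * (rpow (INR k + 1) (2 * h) + rpow (INR k - 1) (2 * h)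
         - 2 * rpow (INR k) (2 * h)).

From Stdlib Require Import Reals Lra Lia.
From Coquelicot Require Import Coquelicot.
Open Scope R_scope.

(* For k >= 2, rho_h(k) is half the second difference of t^(2h) at k, so the
   mean value theorem puts it between h (2h-1) (k+1)^(2h-2) and
   h (2h-1) (k-1)^(2h-2); hence rho_h(k)^2 decays like k^(4h-4), which is
   summable for h < 3/4.  Every rho_h(k) is nonnegative and nondecreasing in h
   (for t >= 1 the second derivative of t^(2h) grows with h), strictly so at
   k = 1 where rho_h(1) = 2^(2h-1) - 1, so S(h) = sum_k rho_h(k)^2 is strictly
   increasing on (1/2, 3/4).  The same bounds give S(11/20) < 1/4 < S(149/200),
   the latter from the almost harmonic tail k^(-1.02).  For a strictly
   increasing function no continuity is needed: h_c = sup {h | S(h) <= 1/4}. *)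

Definition second_diff (f : R -> R) (x : R) : R := f (x + 1) + f (x - 1) - 2 * f x.

Lemma second_diff_nonneg (f f' f'' : R -> R) (x : R) :
  (forall t, x - 1 <= t <= x + 1 -> derivable_pt_lim f t (f' t)) ->
  (forall t, x - 1 <= t <= x + 1 -> derivable_pt_lim f' t (f'' t)) ->
  (forall t, x - 1 <= t <= x + 1 -> 0 <= f'' t) ->
  0 <= second_diff f x.
Proof.
  intros Df Df' Hf''.
  destruct (MVT_cor2 f f' (x - 1) x) as [c1 [E1 Hc1]]; [lra | intros; apply Df; lra |].
  destruct (MVT_cor2 f f' x (x + 1)) as [c2 [E2 Hc2]]; [lra | intros; apply Df; lra |].
  destruct (MVT_cor2 f' f'' c1 c2) as [c3 [E3 Hc3]]; [lra | intros; apply Df'; lra |].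
  assert (0 <= f'' c3) by (apply Hf''; lra).
  assert (0 <= f' c2 - f' c1) by (rewrite E3; apply Rmult_le_pos; lra).
  unfold second_diff. lra.
Qed.

Lemma second_diff_le (f f' f'' g g' g'' : R -> R) (x : R) :
  (forall t, x - 1 <= t <= x + 1 -> derivable_pt_lim f t (f' t)) ->
  (forall t, x - 1 <= t <= x + 1 -> derivable_pt_lim f' t (f'' t)) ->
  (forall t, x - 1 <= t <= x + 1 -> derivable_pt_lim g t (g' t)) ->
  (forall t, x - 1 <= t <= x + 1 -> derivable_pt_lim g' t (g'' t)) ->
  (forall t, x - 1 <= t <= x + 1 -> f'' t <= g'' t) ->
  second_diff f x <= second_diff g x.
Proof.
  intros Df Df' Dg Dg' Hle.
  assert (H : 0 <= second_diff (fun s => g s - f s) x).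
  { apply (second_diff_nonneg _ (fun s => g' s - f' s) (fun s => g'' s - f'' s));
      intros t Ht.
    - apply (derivable_pt_lim_minus g f); auto.
    - apply (derivable_pt_lim_minus g' f'); auto.
    - specialize (Hle t Ht). lra. }
  unfold second_diff in *. lra.
Qed.

Lemma derivable_pt_lim_half_sq (c t : R) :
  derivable_pt_lim (fun s => c / 2 * s ^ 2) t (c * t).
Proof. apply is_derive_Reals. auto_derive; auto. field. Qed.

Lemma derivable_pt_lim_Rpower_deriv (a t : R) : 0 < t ->
  derivable_pt_lim (fun s => a * Rpower s (a - 1)) t (a * (a - 1) * Rpower t (a - 2)).
Proof.
  intros Ht.
  replace (a * (a - 1) * Rpower t (a - 2))
    with (a * ((a - 1) * Rpower t (a - 1 - 1))) by (replace (a - 1 - 1) with (a - 2) by ring; ring).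
  apply (derivable_pt_lim_scal (fun s => Rpower s (a - 1))).
  now apply derivable_pt_lim_power.
Qed.

Lemma Rpower_le_base_nonpos (u v c : R) : 0 < u -> u <= v -> c <= 0 ->
  Rpower v c <= Rpower u c.
Proof.
  intros Hu Huv Hc.
  replace c with (- - c) by ring. rewrite (Rpower_Ropp v), (Rpower_Ropp u).
  apply Rinv_le_contravar; [apply exp_pos |].
  apply Rle_Rpower_l; lra.
Qed.

Lemma second_diff_Rpower_le (a x : R) : 1 <= a <= 2 -> 1 < x ->
  second_diff (fun s => Rpower s a) x <= a * (a - 1) * Rpower (x - 1) (a - 2).
Proof.
  intros Ha Hx. set (M := a * (a - 1) * Rpower (x - 1) (a - 2)).
  replace M with (second_diff (fun s => M / 2 * s ^ 2) x) by (unfold second_diff; field).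
  apply (second_diff_le _ (fun s => a * Rpower s (a - 1)) (fun s => a * (a - 1) * Rpower s (a - 2))
           _ (fun s => M * s) (fun _ => M)); intros t Ht.
  - apply derivable_pt_lim_power; lra.
  - apply derivable_pt_lim_Rpower_deriv; lra.
  - apply derivable_pt_lim_half_sq.
  - apply is_derive_Reals. auto_derive; auto; ring.
  - assert (Rpower t (a - 2) <= Rpower (x - 1) (a - 2)) by (apply Rpower_le_base_nonpos; lra).
    unfold M. apply Rmult_le_compat_l; nra.
Qed.

Lemma second_diff_Rpower_ge (a x : R) : 1 <= a <= 2 -> 1 < x ->
  a * (a - 1) * Rpower (x + 1) (a - 2) <= second_diff (fun s => Rpower s a) x.
Proof.
  intros Ha Hx. set (m := a * (a - 1) * Rpower (x + 1) (a - 2)).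
  replace m with (second_diff (fun s => m / 2 * s ^ 2) x) by (unfold second_diff; field).
  apply (second_diff_le _ (fun s => m * s) (fun _ => m)
           _ (fun s => a * Rpower s (a - 1)) (fun s => a * (a - 1) * Rpower s (a - 2))); intros t Ht.
  - apply derivable_pt_lim_half_sq.
  - apply is_derive_Reals. auto_derive; auto; ring.
  - apply derivable_pt_lim_power; lra.
  - apply derivable_pt_lim_Rpower_deriv; lra.
  - assert (Rpower (x + 1) (a - 2) <= Rpower t (a - 2)) by (apply Rpower_le_base_nonpos; lra).
    unfold m. apply Rmult_le_compat_l; nra.
Qed.

Lemma second_diff_Rpower_mono (a b x : R) : 1 <= a <= b -> 2 <= x ->
  second_diff (fun s => Rpower s a) x <= second_diff (fun s => Rpower s b) x.
Proof.
  intros Hab Hx.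
  apply (second_diff_le _ (fun s => a * Rpower s (a - 1)) (fun s => a * (a - 1) * Rpower s (a - 2))
           _ (fun s => b * Rpower s (b - 1)) (fun s => b * (b - 1) * Rpower s (b - 2)));
    intros t Ht.
  1, 3: apply derivable_pt_lim_power; lra.
  1, 2: apply derivable_pt_lim_Rpower_deriv; lra.
  assert (Rpower t (a - 2) <= Rpower t (b - 2)) by (apply Rle_Rpower; lra).
  assert (0 < Rpower t (a - 2)) by apply exp_pos.
  apply Rle_trans with (b * (b - 1) * Rpower t (a - 2)).
  - apply Rmult_le_compat_r; nra.
  - apply Rmult_le_compat_l; nra.
Qed.
Lemma series_nonneg_bounded (a : nat -> R) (B : R) :
  (forall n, 0 <= a n) -> (forall N, sum_f_R0 a N <= B) ->
  ex_series a /\ Series a <= B.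
Proof.
  intros Ha HB.
  assert (Hinc : forall n, sum_n a n <= sum_n a (S n)).
  { intros n. rewrite !sum_n_Reals. simpl. specialize (Ha (S n)). lra. }
  assert (Hb : forall n, sum_n a n <= B) by (intros n; rewrite sum_n_Reals; apply HB).
  destruct (ex_finite_lim_seq_incr _ B Hinc Hb) as [l Hl].
  split; [now exists l |].
  unfold Series. rewrite (is_lim_seq_unique _ _ Hl).
  exact (is_lim_seq_le (sum_n a) (fun _ => B) l B Hb Hl (is_lim_seq_const B)).
Qed.

Lemma sum_f_R0_le_Series (a : nat -> R) (N : nat) :
  (forall n, 0 <= a n) -> ex_series a -> sum_f_R0 a N <= Series a.
Proof.
  intros Ha [l Hl].
  rewrite (is_series_unique _ _ Hl), <- sum_n_Reals.
  apply (is_lim_seq_incr_compare (sum_n a) l Hl).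
  intros n. rewrite !sum_n_Reals. simpl. specialize (Ha (S n)). lra.
Qed.

Lemma Series_lt_of_head_lt (a b : nat -> R) :
  (forall n, 0 <= a n <= b n) -> a 0%nat < b 0%nat ->
  ex_series a -> ex_series b -> Series a < Series b.
Proof.
  intros Hab H0 Ea Eb.
  rewrite (Series_incr_1 a Ea), (Series_incr_1 b Eb).
  assert (Series (fun k => a (S k)) <= Series (fun k => b (S k))).
  { apply Series_le; [intros n; apply Hab | exact (proj1 (ex_series_incr_1 b) Eb)]. }
  lra.
Qed.

Lemma Rpower_neg_le_diff (p x : R) : 1 < p -> 0 < x ->
  Rpower (x + 1) (- p) <= (Rpower x (1 - p) - Rpower (x + 1) (1 - p)) / (p - 1).
Proof.
  intros Hp Hx.
  destruct (MVT_cor2 (fun s => Rpower s (1 - p)) (fun s => (1 - p) * Rpower s (1 - p - 1)) x (x + 1))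
    as [c [E Hc]]; [lra | intros; apply derivable_pt_lim_power; lra |].
  replace (1 - p - 1) with (- p) in E by ring.
  assert (Rpower (x + 1) (- p) <= Rpower c (- p)) by (apply Rpower_le_base_nonpos; lra).
  apply Rmult_le_reg_r with (p - 1); [lra |].
  unfold Rdiv. rewrite Rmult_assoc, Rinv_l by lra. nra.
Qed.

(* The comparison with [1 + \int_1^oo t^-p dt = p / (p - 1)]. *)
Lemma sum_Rpower_neg_le (p : R) (N : nat) : 1 < p ->
  sum_f_R0 (fun n => Rpower (INR n + 1) (- p)) N <= p / (p - 1).
Proof.
  intros Hp.
  assert (Hsum : sum_f_R0 (fun n => Rpower (INR n + 1) (- p)) N
                   <= 1 + (1 - Rpower (INR N + 1) (1 - p)) / (p - 1)).
  { induction N as [|N IH].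
    - simpl. replace (0 + 1) with 1 by ring. unfold Rpower. rewrite ln_1, !Rmult_0_r, exp_0.
      unfold Rdiv. lra.
    - rewrite tech5, S_INR.
      pose proof (Rpower_neg_le_diff p (INR N + 1) Hp ltac:(pose proof (pos_INR N); lra)).
      unfold Rdiv in *. lra. }
  assert (0 < Rpower (INR N + 1) (1 - p)) by apply exp_pos.
  assert (0 < / (p - 1)) by (apply Rinv_0_lt_compat; lra).
  replace (p / (p - 1)) with (1 + 1 / (p - 1)) by (field; lra).
  unfold Rdiv in *. nra.
Qed.

Lemma Rpower_neg_ge_ln_diff (x e L : R) : 1 <= x -> 0 <= e -> ln x <= L -> 0 <= 1 - e * L ->
  (1 - e * L) * (ln (x + 1) - ln x) <= Rpower x (- (1 + e)).
Proof.
  intros Hx He HL HK.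
  assert (Hpow : Rpower x (- (1 + e)) = / x * exp (- e * ln x)).
  { unfold Rpower. replace (- (1 + e) * ln x) with (- ln x + - e * ln x) by ring.
    rewrite exp_plus, exp_Ropp, exp_ln by lra. reflexivity. }
  assert (Hln : ln (x + 1) - ln x <= / x).
  { rewrite <- ln_div by lra. replace ((x + 1) / x) with (1 + / x) by (field; lra).
    rewrite <- (ln_exp (/ x)) at 2. apply ln_le; [| apply exp_ineq1_le].
    assert (0 < / x) by (apply Rinv_0_lt_compat; lra). lra. }
  assert (0 <= ln (x + 1) - ln x) by (pose proof (ln_le x (x + 1)); lra).
  assert (1 - e * L <= exp (- e * ln x)).
  { pose proof (exp_ineq1_le (- e * ln x)). nra. }
  assert (0 < / x) by (apply Rinv_0_lt_compat; lra).
  rewrite Hpow, (Rmult_comm (/ x)). apply Rmult_le_compat; lra.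
Qed.

(* Comparison with [\int dt / t = ln], using [t^-e >= 1 - e ln t]. *)
Lemma sum_Rpower_neg_ge_ln (a e : R) (N : nat) : 1 <= a -> 0 <= e ->
  0 <= 1 - e * ln (INR N + a) ->
  (1 - e * ln (INR N + a)) * (ln (INR N + a + 1) - ln a)
    <= sum_f_R0 (fun m => Rpower (INR m + a) (- (1 + e))) N.
Proof.
  intros Ha He HK. set (K := 1 - e * ln (INR N + a)).
  assert (Htele : forall M, sum_f_R0 (fun m => K * (ln (INR m + a + 1) - ln (INR m + a))) M
                            = K * (ln (INR M + a + 1) - ln a)).
  { induction M as [|M IH].
    - simpl. rewrite Rplus_0_l. reflexivity.
    - rewrite tech5, IH, S_INR. replace (INR M + 1 + a) with (INR M + a + 1) by ring. ring. }
  rewrite <- Htele. apply sum_Rle. intros m Hm.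
  pose proof (pos_INR m). apply le_INR in Hm.
  apply Rpower_neg_ge_ln_diff; [lra | lra | apply ln_le; lra | exact HK].
Qed.

Lemma rpow_pos_base (x a : R) : 0 < x -> rpow x a = Rpower x a.
Proof. intros Hx. unfold rpow. destruct (Rle_dec x 0); [lra | reflexivity]. Qed.

Lemma rho_1 (h : R) : rho h 1 = / 2 * (Rpower 2 (2 * h) - 2).
Proof.
  unfold rho. simpl INR.
  rewrite (rpow_pos_base (1 + 1)), (rpow_pos_base 1) by lra.
  unfold rpow. destruct (Rle_dec (1 - 1) 0); [| lra].
  replace (1 + 1) with 2 by ring.
  unfold Rpower at 2. rewrite ln_1, Rmult_0_r, exp_0. ring.
Qed.

Lemma rho_SS (h : R) (m : nat) :
  rho h (S (S m)) = / 2 * second_diff (fun s => Rpower s (2 * h)) (INR m + 2).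
Proof.
  unfold rho, second_diff. pose proof (pos_INR m).
  replace (INR (S (S m))) with (INR m + 2) by (rewrite !S_INR; ring).
  rewrite !rpow_pos_base by lra. ring.
Qed.

Lemma rho_SS_bounds (h : R) (m : nat) : 1 / 2 <= h <= 1 ->
  h * (2 * h - 1) * Rpower (INR m + 3) (2 * h - 2) <= rho h (S (S m))
  <= h * (2 * h - 1) * Rpower (INR m + 1) (2 * h - 2).
Proof.
  intros Hh. rewrite rho_SS. pose proof (pos_INR m).
  pose proof (second_diff_Rpower_ge (2 * h) (INR m + 2) ltac:(lra) ltac:(lra)).
  pose proof (second_diff_Rpower_le (2 * h) (INR m + 2) ltac:(lra) ltac:(lra)).
  replace (INR m + 2 + 1) with (INR m + 3) in * by ring.
  replace (INR m + 2 - 1) with (INR m + 1) in * by ring.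
  lra.
Qed.

Definition rho_sq (h : R) (n : nat) : R := (rho h (S n)) ^ 2.

Lemma rho_sq_nonneg (h : R) (n : nat) : 0 <= rho_sq h n.
Proof. apply pow2_ge_0. Qed.

Lemma Rpower_sq (x e : R) : (Rpower x e) ^ 2 = Rpower x (2 * e).
Proof. simpl. rewrite Rmult_1_r, <- Rpower_plus. f_equal. ring. Qed.

Lemma rho_sq_SS_bounds (h : R) (m : nat) : 1 / 2 <= h <= 1 ->
  (h * (2 * h - 1)) ^ 2 * Rpower (INR m + 3) (- (4 - 4 * h)) <= rho_sq h (S m)
  <= (h * (2 * h - 1)) ^ 2 * Rpower (INR m + 1) (- (4 - 4 * h)).
Proof.
  intros Hh. unfold rho_sq.
  pose proof (rho_SS_bounds h m Hh) as Hb.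
  assert (0 < Rpower (INR m + 3) (2 * h - 2)) by apply exp_pos.
  assert (0 <= h * (2 * h - 1)) by nra.
  replace (- (4 - 4 * h)) with (2 * (2 * h - 2)) by ring.
  rewrite <- !Rpower_sq, <- !Rpow_mult_distr.
  split; apply pow_incr; nra.
Qed.

Lemma rho_sq_summable (h : R) : 1 / 2 <= h < 3 / 4 ->
  ex_series (rho_sq h) /\
  Series (rho_sq h) <= rho_sq h 0 + (h * (2 * h - 1)) ^ 2 * ((4 - 4 * h) / (3 - 4 * h)).
Proof.
  intros Hh. set (c2 := (h * (2 * h - 1)) ^ 2).
  assert (Hc2 : 0 <= c2) by apply pow2_ge_0.
  assert (Hp : 0 < (4 - 4 * h) / (3 - 4 * h)) by (apply Rdiv_lt_0_compat; lra).
  apply series_nonneg_bounded; [apply rho_sq_nonneg | intros [|N]].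
  - simpl. nra.
  - rewrite decomp_sum by lia. simpl Init.Nat.pred.
    assert (Htail : sum_f_R0 (fun i => rho_sq h (S i)) N
                    <= sum_f_R0 (fun i => Rpower (INR i + 1) (- (4 - 4 * h)) * c2) N).
    { apply sum_growing. intros i. rewrite Rmult_comm. apply rho_sq_SS_bounds. lra. }
    rewrite <- scal_sum in Htail.
    pose proof (sum_Rpower_neg_le (4 - 4 * h) N ltac:(lra)) as Hz.
    replace (4 - 4 * h - 1) with (3 - 4 * h) in Hz by ring.
    assert (c2 * sum_f_R0 (fun i => Rpower (INR i + 1) (- (4 - 4 * h))) N
            <= c2 * ((4 - 4 * h) / (3 - 4 * h))) by (apply Rmult_le_compat_l; lra).
    lra.
Qed.

Lemma rho_S_nonneg_mono (h h' : R) (n : nat) : 1 / 2 <= h <= h' -> h' <= 1 ->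
  0 <= rho h (S n) <= rho h' (S n).
Proof.
  intros Hh Hh'. destruct n as [|m].
  - rewrite !rho_1.
    assert (Rpower 2 1 <= Rpower 2 (2 * h)) by (apply Rle_Rpower; lra).
    assert (Rpower 2 (2 * h) <= Rpower 2 (2 * h')) by (apply Rle_Rpower; lra).
    rewrite Rpower_1 in * by lra. lra.
  - split.
    + assert (0 <= h * (2 * h - 1) * Rpower (INR m + 3) (2 * h - 2))
        by (apply Rmult_le_pos; [nra | apply Rlt_le, exp_pos]).
      pose proof (rho_SS_bounds h m ltac:(lra)). lra.
    + rewrite !rho_SS. apply Rmult_le_compat_l; [lra |].
      apply second_diff_Rpower_mono; [lra | pose proof (pos_INR m); lra].
Qed.

Lemma rho_1_lt (h h' : R) : 1 / 2 < h -> h < h' -> 0 < rho h 1 < rho h' 1.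
Proof.
  intros Hh Hhh'. rewrite !rho_1.
  assert (Rpower 2 1 < Rpower 2 (2 * h)) by (apply Rpower_lt; lra).
  assert (Rpower 2 (2 * h) < Rpower 2 (2 * h')) by (apply Rpower_lt; lra).
  rewrite Rpower_1 in * by lra. lra.
Qed.

Lemma Series_rho_sq_lt (h h' : R) : 1 / 2 < h -> h < h' -> h' < 3 / 4 ->
  Series (rho_sq h) < Series (rho_sq h').
Proof.
  intros Hh Hhh' Hh'.
  apply Series_lt_of_head_lt.
  - intros n. split; [apply rho_sq_nonneg |]. apply pow_incr, rho_S_nonneg_mono; lra.
  - pose proof (rho_1_lt h h' Hh Hhh'). unfold rho_sq. nra.
  - apply rho_sq_summable; lra.
  - apply rho_sq_summable; lra.
Qed.

Lemma ln_2_lt_1 : ln 2 < 1.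
Proof.
  rewrite <- (ln_exp 1). apply ln_increasing; [lra |].
  pose proof (exp_ineq1 1). lra.
Qed.

Lemma exp_le_inv_1_minus (y : R) : y < 1 -> exp y <= / (1 - y).
Proof.
  intros Hy. replace y with (- - y) at 1 by ring. rewrite exp_Ropp.
  apply Rinv_le_contravar; [lra | apply exp_ineq1_le].
Qed.

Lemma Series_rho_sq_11_20 : Series (rho_sq (11 / 20)) < 1 / 4.
Proof.
  destruct (rho_sq_summable (11 / 20) ltac:(lra)) as [_ Hle].
  unfold rho_sq at 2 in Hle. rewrite rho_1 in Hle.
  replace (2 * (11 / 20)) with (1 + 1 / 10) in Hle by field.
  rewrite Rpower_plus, Rpower_1 in Hle by lra.
  pose proof ln_2_lt_1. pose proof ln_lt_2.
  pose proof (exp_le_inv_1_minus (1 / 10 * ln 2) ltac:(lra)).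
  pose proof (exp_ineq1_le (1 / 10 * ln 2)).
  assert (/ (1 - 1 / 10 * ln 2) <= 10 / 9)
    by (replace (10 / 9) with (/ (9 / 10)) by field; apply Rinv_le_contravar; lra).
  unfold Rpower in Hle. set (u := exp (1 / 10 * ln 2)) in *.
  assert ((/ 2 * (2 * u - 2)) ^ 2 <= (1 / 9) ^ 2) by (apply pow_incr; lra).
  lra.
Qed.

Lemma Series_rho_sq_149_200 : 1 / 4 < Series (rho_sq (149 / 200)).
Proof.
  set (h := 149 / 200). set (N := (2 ^ 12 - 4)%nat).
  assert (HN : INR N + 3 + 1 = 2 ^ 12).
  { unfold N. rewrite minus_INR, pow_INR by (simpl; lia). simpl. ring. }
  destruct (rho_sq_summable h ltac:(unfold h; lra)) as [Hex _].
  pose proof (sum_f_R0_le_Series (rho_sq h) (S N) (rho_sq_nonneg h) Hex) as Hpart.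
  rewrite decomp_sum in Hpart by lia. simpl Init.Nat.pred in Hpart.
  pose proof (rho_sq_nonneg h 0).
  set (c2 := (h * (2 * h - 1)) ^ 2).
  assert (Htail : sum_f_R0 (fun m => Rpower (INR m + 3) (- (1 + 1 / 50)) * c2) N
                  <= sum_f_R0 (fun i => rho_sq h (S i)) N).
  { apply sum_growing. intros m. rewrite Rmult_comm.
    replace (- (1 + 1 / 50)) with (- (4 - 4 * h)) by (unfold h; field).
    apply rho_sq_SS_bounds. unfold h; lra. }
  rewrite <- scal_sum in Htail.
  pose proof ln_2_lt_1. pose proof ln_lt_2.
  assert (Hln12 : ln (INR N + 3 + 1) = 12 * ln 2) by (rewrite HN, ln_pow by lra; simpl; ring).
  assert (Hln3 : ln 3 < 2).
  { assert (Hle : ln 3 <= ln (2 * 2)) by (apply ln_le; lra). rewrite ln_mult in Hle by lra. lra. }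
  assert (HlnN : ln (INR N + 3) <= 12 * ln 2)
    by (rewrite <- Hln12; apply ln_le; pose proof (pos_INR N); lra).
  pose proof (sum_Rpower_neg_ge_ln 3 (1 / 50) N ltac:(lra) ltac:(lra) ltac:(lra)) as Hsum.
  rewrite Hln12 in Hsum.
  assert (Hc2 : c2 = (7301 / 20000) ^ 2) by (unfold c2, h; field).
  assert (304 / 100 <= (1 - 1 / 50 * ln (INR N + 3)) * (12 * ln 2 - ln 3)) by nra.
  nra.
Qed.

Lemma strictly_increasing_crosses_level (f : R -> R) (a b v h0 h1 : R) :
  (forall x y, a < x -> x < y -> y < b -> f x < f y) ->
  a < h0 -> h0 < h1 -> h1 < b -> f h0 < v -> v < f h1 ->
  exists c, h0 <= c <= h1 /\
    (forall x, a < x < c -> f x < v) /\ (forall x, c < x < b -> v < f x).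
Proof.
  intros Hinc Ha Hh01 Hb Hv0 Hv1.
  set (E := fun x => a < x < b /\ f x <= v).
  assert (HE1 : forall x, E x -> x <= h1).
  { intros x [Hx Hfx]. destruct (Rle_dec x h1) as [| Hnle]; [assumption |].
    pose proof (Hinc h1 x ltac:(lra) ltac:(lra) ltac:(lra)). lra. }
  assert (HE0 : E h0) by (split; [split |]; lra).
  destruct (completeness E (ex_intro _ h1 HE1) (ex_intro _ h0 HE0)) as [c [Hub Hlub]].
  pose proof (Hub h0 HE0).
  exists c. split; [split | split].
  - assumption.
  - apply Hlub. exact HE1.
  - intros x Hx. destruct (Rlt_dec (f x) v) as [| Hnlt]; [assumption |].
    assert (c <= x); [| lra].
    apply Hlub. intros y [Hy Hfy]. destruct (Rle_dec y x) as [| Hnle]; [assumption |].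
    pose proof (Hinc x y ltac:(lra) ltac:(lra) ltac:(lra)). lra.
  - intros x Hx. destruct (Rlt_dec v (f x)) as [| Hnlt]; [assumption |].
    assert (x <= c); [| lra].
    apply Hub. split; [split |]; lra.
Qed.

Theorem corollaryA5 :
  exists hc : R, 1/2 < hc < 3/4 /\
    (forall h : R, 1/2 < h < hc ->
       ex_series (fun n : nat => (rho h (S n))^2) /\
       Series (fun n : nat => (rho h (S n))^2) < 1/4) /\
    (forall h : R, hc < h < 3/4 ->
       ex_series (fun n : nat => (rho h (S n))^2) /\
       Series (fun n : nat => (rho h (S n))^2) > 1/4).
Proof.
  destruct (strictly_increasing_crosses_level (fun h => Series (rho_sq h))
              (1 / 2) (3 / 4) (1 / 4) (11 / 20) (149 / 200))
    as [hc [Hhc [Hbelow Habove]]];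
    [intros; now apply Series_rho_sq_lt | lra | lra | lra
    | exact Series_rho_sq_11_20 | exact Series_rho_sq_149_200 |].
  exists hc. split; [lra | split]; intros h Hh.
  - split; [apply rho_sq_summable; lra | now apply Hbelow].
  - split; [apply rho_sq_summable; lra | now apply Habove].
Qed.
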